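(* Let $\Gamma,\Delta$ be finitely generated groups with free continuous actions on compact metric spaces $Y$ and $X$ respectively, and let $f:Y\to X$ be a bijection (not necessarily continuous) inducing a quasi-isometry of warped cones, i.e. there are an index set $I$, maps $i\mapsto t_i$ and $i\mapsto\tau_i$ from $I$ onto $(0,\infty)$, and $C\ge1,A\ge0$ such that each $f:(t_iY,d_\Gamma)\to(\tau_iX,d_\Delta)$ is a $(C,A)$-quasi-isometry. Then there is a cocycle $\delta:\Gamma\times Y\to\Delta$ (i.e. $\delta(\gamma_2,\gamma_1y)\delta(\gamma_1,y)=\delta(\gamma_2\gamma_1,y)$) such that for each fixed $y$ the map $\gamma\mapsto\delta(\gamma,y)$ is a bijection $\Gamma\to\Delta$, and there are $C'\ge1$, $A'\ge0$ with $C'^{-1}|\gamma|-A'\le|\delta(\gamma,y)|\le C'|\gamma|+A'$ for all $\gamma,y$. In particular, $\Gamma$ and $\Delta$ are bijectively quasi-isometric.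
   Context: $|\cdot|$ is word length with respect to fixed finite symmetric generating sets. For a compact metric space $(Y,d)$ with a $\Gamma$-action and $t>0$, $tY$ is $Y$ with metric $td$ and $d_\Gamma$ is the largest metric on $tY$ with $d_\Gamma\le td$ and $d_\Gamma(y,sy)\le1$ for generators $s$. A $(C,A)$-quasi-isometry $g:Z\to W$ satisfies $C^{-1}d(z,z')-A\le d(g(z),g(z'))\le Cd(z,z')+A$ and the $A$-neighbourhood of $g(Z)$ equals $W$. *)

From HB Require Import structures.
From mathcomp Require Import all_boot all_order all_algebra.
From mathcomp Require Import all_classical all_reals.
From mathcomp Require Import Rstruct.
Set Implicit Arguments. Unset Strict Implicit. Unset Printing Implicit Defensive.
Import Order.TTheory GRing.Theory Num.Theory.
Local Open Scope ring_scope.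
Local Open Scope classical_set_scope.

Notation R := Rdefinitions.R.

Record group := Group {
  gcar :> Type;
  gmul : gcar -> gcar -> gcar;
  gone : gcar;
  ginv : gcar -> gcar;
  gmulA : forall x y z, gmul x (gmul y z) = gmul (gmul x y) z;
  gmul1 : forall x, gmul gone x = x;
  gmulV : forall x, gmul (ginv x) x = gone }.

Definition is_word (G : group) (S : seq G) (n : nat) (g : G) : Prop :=
  exists l : seq G, size l = n /\ List.Forall (fun s => List.In s S) l /\
                    foldr (@gmul G) (@gone G) l = g.

Definition fin_sym_gen (G : group) (S : seq G) : Prop :=
  (forall s, List.In s S -> List.In (ginv s) S) /\
  (forall g : G, exists n, is_word S n g).

Lemma wordlen_ex (G : group) (S : seq G) (g : G) :
  (exists n, is_word S n g) -> exists n, `[< is_word S n g >].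
Proof. by move=> [n h]; exists n; apply/asboolP. Qed.

(* word length |g| w.r.t. S: least n with g a product of n generators
   (0 if g is not in the generated subgroup, which never happens for a
   generating set) *)
Definition wordlen (G : group) (S : seq G) (g : G) : nat :=
  match pselect (exists n, is_word S n g) with
  | left h => ex_minn (wordlen_ex h)
  | right _ => 0%N
  end.

Definition is_action (G : group) (Y : Type) (act : G -> Y -> Y) : Prop :=
  (forall y, act (gone G) y = y) /\
  (forall g h y, act (gmul g h) y = act g (act h y)).

Definition free_action (G : group) (Y : Type) (act : G -> Y -> Y) : Prop :=
  forall g y, act g y = y -> g = gone G.

Definition is_metric (Y : Type) (d : Y -> Y -> R) : Prop :=
  (forall x y, 0 <= d x y) /\ (forall x y, d x y = 0 <-> x = y) /\
  (forall x y, d x y = d y x) /\ (forall x y z, d x z <= d x y + d y z).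

Definition dopen (Y : Type) (d : Y -> Y -> R) (U : set Y) : Prop :=
  forall x, U x -> exists2 e : R, 0 < e & forall y, d x y < e -> U y.

Definition dcompact (Y : Type) (d : Y -> Y -> R) : Prop :=
  forall (I : Type) (U : I -> set Y), (forall i, dopen d (U i)) ->
    (forall y, exists i, U i y) ->
    exists F : seq I, forall y, exists2 i, List.In i F & U i y.

Definition dcontinuous (Y : Type) (d : Y -> Y -> R) (h : Y -> Y) : Prop :=
  forall x (e : R), 0 < e -> exists2 r : R, 0 < r &
    forall y, d x y < r -> d (h x) (h y) < e.

Definition free_cont_action (G : group) (Y : Type) (d : Y -> Y -> R)
  (act : G -> Y -> Y) : Prop :=
  is_metric d /\ dcompact d /\ is_action act /\ free_action act /\
  (forall g, dcontinuous d (act g)).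

Definition warp_admissible (G : group) (S : seq G) (Y : Type)
  (act : G -> Y -> Y) (d : Y -> Y -> R) (t : R) (rho : Y -> Y -> R) : Prop :=
  is_metric rho /\ (forall x y, rho x y <= t * d x y) /\
  (forall s y, List.In s S -> rho y (act s y) <= 1).

(* d_Gamma on tY: the largest such metric (pointwise supremum) *)
Definition warped_dist (G : group) (S : seq G) (Y : Type)
  (act : G -> Y -> Y) (d : Y -> Y -> R) (t : R) (x y : Y) : R :=
  sup [set r : R | exists2 rho, warp_admissible S act d t rho & r = rho x y].

Definition quasi_isometry (Z W : Type) (dZ : Z -> Z -> R) (dW : W -> W -> R)
  (C A : R) (g : Z -> W) : Prop :=
  (forall z z', C^-1 * dZ z z' - A <= dW (g z) (g z') /\
                dW (g z) (g z') <= C * dZ z z' + A) /\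
  (forall w, exists z, dW (g z) w <= A).

From mathcomp Require Import all_boot all_order all_algebra.
From mathcomp Require Import all_classical all_reals.
From mathcomp Require Import Rstruct.
From mathcomp Require Import ring lra zify.
Import Order.TTheory GRing.Theory Num.Theory.
Set Implicit Arguments. Unset Strict Implicit.
Local Open Scope ring_scope.

(* Write d_t for the warped distance on tY. If d_t(a, b) <= D for every t > 0,
   then b = g a for some g with |g| <= 2D. Otherwise, with N the integer part
   of 2D, the finitely many points g a, for g a product of k <= N generators,
   all differ from b, and continuity of the generators gives radii
   r_0 <= r_k <= min d(b, g a) such that each generator s maps the r_k-ball
   around g a into the r_(k+1)/2-ball around s g a. For t large enough,
   x |-> min(N + 1, min_(k,g) k + t (d(x, g a) - r_k/2)_+) is t-Lipschitz and
   moves by at most 1 along generators; it thus yields an admissible metric in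
   which a and b are (N + 1)/2 apart.
   Hence f maps s y to delta f(y) with |delta| <= 2(C + A), and f^-1 behaves
   likewise. Freeness makes delta unique, so it is a cocycle, inverted in its
   first variable by the cocycle of f^-1, and the bounds on generators
   propagate to word length. *)

(** * Word length *)

Section Words.
Variable G : group.
Implicit Types (g h : G) (S : seq G).

Lemma gmulVr g : gmul g (ginv g) = gone G.
Proof.
by rewrite -[gmul g _]gmul1 -(gmulV (ginv g)) -gmulA (gmulA (ginv g)) (gmulV g) gmul1.
Qed.

Lemma gmulr1 g : gmul g (gone G) = g.
Proof. by rewrite -(gmulV g) gmulA gmulVr gmul1. Qed.

Lemma gmul_foldr (l : seq G) h :
  gmul (foldr (@gmul G) (gone G) l) h = foldr (@gmul G) h l.
Proof. by elim: l => [|s l IH] /=; rewrite ?gmul1 // -gmulA IH. Qed.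

Lemma is_word0 S : is_word S 0 (gone G).
Proof. by exists [::]. Qed.

Lemma is_wordM S m n g h :
  is_word S m g -> is_word S n h -> is_word S (m + n) (gmul g h).
Proof.
move=> [l1 [<- [S_l1 <-]]] [l2 [<- [S_l2 <-]]]; exists (l1 ++ l2).
rewrite size_cat foldr_cat gmul_foldr; do !split => //.
exact/List.Forall_app.
Qed.

Lemma wordlen_min S n g : is_word S n g -> (wordlen S g <= n)%N.
Proof.
move=> wg; rewrite /wordlen; case: pselect => // ex.
by case: ex_minnP => m _; apply; exact/asboolP.
Qed.

Lemma wordlenP S g : fin_sym_gen S -> is_word S (wordlen S g) g.
Proof.
move=> [_ gen]; rewrite /wordlen; case: pselect => [ex|]; last by move/(_ (gen g)).
by case: ex_minnP => m /asboolP.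
Qed.

Lemma wordlenM S g h : fin_sym_gen S ->
  (wordlen S (gmul g h) <= wordlen S g + wordlen S h)%N.
Proof. by move=> hS; apply/wordlen_min/is_wordM; exact: wordlenP. Qed.

Lemma wordlen1 S : wordlen S (gone G) = 0%N.
Proof. by apply/eqP; rewrite -leqn0; apply/wordlen_min/is_word0. Qed.

Fixpoint products S n : seq G :=
  if n is n'.+1 then List.flat_map (fun s => List.map (gmul s) (products S n')) S
  else [:: gone G].

Lemma products_is_word S n g : List.In g (products S n) -> is_word S n g.
Proof.
elim: n g => [g [<-|//]|n IH g /=]; first exact: is_word0.
move=> /List.in_flat_map[s [Ss /List.in_map_iff[g' [<- /IH [l [<- [S_l <-]]]]]]].
by exists (s :: l); split; [|split; first constructor].
Qed.

Lemma products_mul S n s g : List.In s S -> List.In g (products S n) ->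
  List.In (gmul s g) (products S n.+1).
Proof. by move=> Ss Pg; apply/List.in_flat_map; exists s; split; last exact: List.in_map. Qed.

Definition graded_ball S N : seq (nat * G) :=
  List.flat_map (fun k => List.map (pair k) (products S k)) (List.seq 0 N.+1).

Lemma graded_ballP S N k g :
  List.In (k, g) (graded_ball S N) <-> (k <= N)%N /\ List.In g (products S k).
Proof.
rewrite List.in_flat_map; split.
  move=> [k' [/List.in_seq [_ /ssrnat.ltP k'N] /List.in_map_iff [g' [[<- <-] Pg]]]].
  by split.
move=> [kN Pg]; exists k; split; last exact: List.in_map.
by apply/List.in_seq; split; [exact: PeanoNat.Nat.le_0_l | apply/ssrnat.ltP].
Qed.

End Words.

Section FreeAction.
Variables (G : group) (Y : Type) (act : G -> Y -> Y).
Hypotheses (act_action : is_action act) (act_free : free_action act).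

Lemma free_action_inj g h y : act g y = act h y -> g = h.
Proof.
have [act1 actM] := act_action => e.
have : act (gmul (ginv h) g) y = y by rewrite actM e -actM gmulV act1.
move/act_free => e'.
by rewrite -[g]gmul1 -(gmulVr h) -gmulA e' gmulr1.
Qed.

End FreeAction.

(** * Warped distances *)

Lemma is_metric_truncate (Y : Type) (d : Y -> Y -> R) (t : R) :
  0 < t -> is_metric d -> is_metric (fun x y => Num.min (t * d x y) 1).
Proof.
move=> t_gt0 [d_ge0 [d_eq0 [dC dT]]].
have td_ge0 x y : 0 <= t * d x y by rewrite mulr_ge0 ?d_ge0 ?ltW.
split; [|split; [|split]].
- by move=> x y; rewrite le_min td_ge0 ler01.
- move=> x y; split=> [|->]; last by rewrite (d_eq0 y y).2 // mulr0 (minEle 0) ler01.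
  rewrite minEle; case: ifP => _ => [/eqP|]; last by move/eqP; rewrite oner_eq0.
  by rewrite mulf_eq0 gt_eqF //= => /eqP /d_eq0.
- by move=> x y; rewrite dC.
- move=> x y z; have := ler_wpM2l (ltW t_gt0) (dT x y z).
  have := td_ge0 x y; have := td_ge0 y z; have := td_ge0 x z.
  by case: (leP (t * d x y) 1); case: (leP (t * d y z) 1); case: (leP (t * d x z) 1); lra.
Qed.

Lemma is_metric_add_dist (Y : Type) (m : Y -> Y -> R) (phi : Y -> R) :
  is_metric m -> is_metric (fun x y => (`|phi x - phi y| + m x y) / 2).
Proof.
move=> [m_ge0 [m_eq0 [mC mT]]].
split; [|split; [|split]].
- by move=> x y; rewrite divr_ge0 ?addr_ge0.
- move=> x y; split=> [|->]; last by rewrite subrr normr0 (m_eq0 y y).2 // addr0 mul0r.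
  have := normr_ge0 (phi x - phi y); have := m_ge0 x y => ? ? ?.
  by apply/m_eq0; lra.
- by move=> x y; rewrite distrC mC.
- move=> x y z; have := ler_distD (phi y) (phi x) (phi z); have := mT x y z; lra.
Qed.

Section WarpedDistance.
Variables (G : group) (S : seq G) (Y : Type) (act : G -> Y -> Y).
Variables (d : Y -> Y -> R) (t : R).
Hypotheses (d_metric : is_metric d) (t_gt0 : 0 < t).

(* Halving keeps [test_metric phi <= t * d] when phi is t-Lipschitz. *)
Definition test_metric (phi : Y -> R) (x y : Y) : R :=
  (`|phi x - phi y| + Num.min (t * d x y) 1) / 2.

Lemma test_metric_is_metric (phi : Y -> R) : is_metric (test_metric phi).
Proof. exact/is_metric_add_dist/is_metric_truncate. Qed.

Lemma test_metric_admissible (phi : Y -> R) :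
  (forall x y, phi x <= phi y + t * d x y) ->
  (forall s y, List.In s S -> `|phi y - phi (act s y)| <= 1) ->
  warp_admissible S act d t (test_metric phi).
Proof.
have [_ [_ [dC _]]] := d_metric.
move=> phi_lip phi_gen; split; first exact: test_metric_is_metric.
split=> [x y|s y Ss]; rewrite /test_metric.
- have : `|phi x - phi y| <= t * d x y.
    have := phi_lip x y; have := phi_lip y x; rewrite dC => ? ?.
    by rewrite ler_norml; apply/andP; split; lra.
  by have := ge_min (t * d x y) (t * d x y) 1; rewrite lexx /=; lra.
- by have := phi_gen s y Ss; have := ge_min 1 (t * d y (act s y)) 1; rewrite lexx orbT; lra.
Qed.

Lemma warped_dist_ge (rho : Y -> Y -> R) x y :
  warp_admissible S act d t rho -> rho x y <= warped_dist S act d t x y.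
Proof.
move=> rho_adm; apply: ub_le_sup; last by exists rho.
by exists (t * d x y) => _ [rho' [_ [rho'_le _]] ->].
Qed.

Lemma test_metric0_admissible : warp_admissible S act d t (test_metric (fun=> 0)).
Proof.
apply: test_metric_admissible => [x y|s y _]; last by rewrite subrr normr0 ler01.
by case: d_metric => d_ge0 _; rewrite add0r mulr_ge0 ?d_ge0 ?ltW.
Qed.

Lemma warped_dist_ge0 x y : 0 <= warped_dist S act d t x y.
Proof.
apply: le_trans (warped_dist_ge x y test_metric0_admissible).
by case: (test_metric_is_metric (fun=> 0)).
Qed.

Lemma warped_dist_gen s y : List.In s S -> warped_dist S act d t y (act s y) <= 1.
Proof.
move=> Ss; apply: ge_sup => [|_ [rho [_ [_ rho_gen]] ->]]; last exact: rho_gen.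
by exists (test_metric (fun=> 0) y (act s y)), (test_metric (fun=> 0));
  first exact: test_metric0_admissible.
Qed.

End WarpedDistance.

(** * Separation of orbits *)

Section BigMinIn.
Variables (T : Type) (M : R) (L : seq T).

Lemma bigmin_le_In (F : T -> R) p :
  List.In p L -> \big[Num.min/M]_(q <- L) F q <= F p.
Proof.
elim: L => [|q L' IH] //= [<-|L'p]; rewrite big_cons ge_min ?lexx //.
by rewrite IH ?orbT.
Qed.

Lemma le_bigmin_In (F : T -> R) (c : R) : c <= M ->
  (forall p, List.In p L -> c <= F p) -> c <= \big[Num.min/M]_(q <- L) F q.
Proof.
move=> cM; elim: L => [|q L' IH] cF; rewrite ?big_nil ?big_cons // le_min cF /=; last by left.
by apply: IH => p L'p; apply: cF; right.
Qed.

Lemma bigmin_leD (F F' : T -> R) (c : R) : 0 <= c -> (forall p, F p <= F' p + c) ->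
  \big[Num.min/M]_(q <- L) F q <= \big[Num.min/M]_(q <- L) F' q + c.
Proof.
move=> c_ge0 FF'; apply: (big_ind2 (fun u v => u <= v + c)) => [|x1 x2 y1 y2 le_x le_y|p _].
- by rewrite lerDl.
- by case: (leP x2 y2) => _; rewrite ge_min ?le_x ?le_y ?orbT.
- exact: FF'.
Qed.

End BigMinIn.

Lemma In_common_radius (T : Type) (L : seq T) (P : T -> R -> Prop) :
  (forall p (r r' : R), 0 < r' <= r -> P p r -> P p r') ->
  (forall p, List.In p L -> exists2 r : R, 0 < r & P p r) ->
  exists2 r : R, 0 < r & forall p, List.In p L -> P p r.
Proof.
move=> P_anti; elim: L => [|q L IH] rad; first by exists 1.
have [r1 r1_gt0 Pr1] := rad q (or_introl erefl).
have [r2 r2_gt0 Pr2] := IH (fun p Lp => rad p (or_intror Lp)).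
have r12_gt0 : 0 < Num.min r1 r2 by rewrite lt_min r1_gt0.
exists (Num.min r1 r2) => // p [<-|Lp].
- by apply: P_anti Pr1; rewrite r12_gt0 ge_min lexx.
- by apply: P_anti (Pr2 p Lp); rewrite r12_gt0 ge_min lexx orbT.
Qed.

Lemma finite_equicontinuity_modulus (Y T : Type) (d : Y -> Y -> R) (F : T -> Y -> Y)
    (S : seq T) (pts : seq Y) :
  (forall s, dcontinuous d (F s)) -> exists eta : R -> R, forall e : R, 0 < e ->
    0 < eta e /\ forall s y z, List.In s S -> List.In y pts ->
      d y z < eta e -> d (F s y) (F s z) < e.
Proof.
move=> F_cont.
have modulus (e : R) : exists eta : R, 0 < e -> 0 < eta /\ forall s y z,
    List.In s S -> List.In y pts -> d y z < eta -> d (F s y) (F s z) < e.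
  have [e_gt0|e_le0] := pselect (0 < e); last by exists 0 => /e_le0.
  pose P y r := forall s, List.In s S -> forall z, d y z < r -> d (F s y) (F s z) < e.
  have P_anti y r r' : 0 < r' <= r -> P y r -> P y r'.
    by move=> /andP[_ r'r] Pyr s Ss z yz; exact: Pyr Ss z (lt_le_trans yz r'r).
  have radius_at y : exists2 r : R, 0 < r & P y r.
    apply: (@In_common_radius _ S (fun s r => forall z, d y z < r -> d (F s y) (F s z) < e)).
      by move=> s r r' /andP[_ r'r] Psr z yz; exact: Psr (lt_le_trans yz r'r).
    by move=> s _; exact: F_cont.
  have [r r_gt0 Pr] := In_common_radius P_anti (L := pts) (fun y _ => radius_at y).
  by exists r => _; split=> // s y z Ss Py; exact: Pr.
by have [eta eta_spec] := choice modulus; exists eta.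
Qed.

Lemma shrinking_radii (eta : R -> R) (e : R) (N : nat) :
  0 < e -> (forall x : R, 0 < x -> 0 < eta x) ->
  exists r : nat -> R, [/\ forall k, 0 < r k, forall k, r 0%N <= r k <= e
    & forall k, (k < N)%N -> r k <= eta (r k.+1 / 2)].
Proof.
move=> e_gt0 eta_gt0; pose shrink x := Num.min (eta (x / 2)) x.
have iter_shrink_le n x : iter n shrink x <= x.
  by elim: n => //= n IH; apply: le_trans IH; rewrite /shrink ge_min lexx orbT.
exists (fun k => iter (N - k) shrink e); split.
- move=> k; elim: (N - k)%N => //= n IH.
  by rewrite lt_min IH eta_gt0 ?divr_gt0.
- move=> k; rewrite iter_shrink_le subn0 andbT.
  by rewrite -{1}(subnK (leq_subr k N)) iterD iter_shrink_le.
- move=> k kN; rewrite (_ : (N - k = (N - k.+1).+1)%N) /=; last by lia.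
  by rewrite ge_min lexx.
Qed.

Section Separation.
Variables (G : group) (S : seq G) (Y : Type) (d : Y -> Y -> R) (act : G -> Y -> Y).
Hypotheses (d_metric : is_metric d) (act_action : is_action act)
  (S_sym : forall s, List.In s S -> List.In (ginv s) S).
Variables (a : Y) (N : nat) (r : nat -> R) (t : R).
Hypotheses (r_gt0 : forall k, 0 < r k) (t_gt0 : 0 < t)
  (t_r_ge : forall k, N.+1%:R <= t * (r k / 2))
  (r_step : forall k g s z, List.In (k, g) (graded_ball S N) -> (k < N)%N ->
     List.In s S -> d (act g a) z < r k -> d (act s (act g a)) (act s z) < r k.+1 / 2).

Definition level_cone (p : nat * G) (x : Y) : R :=
  p.1%:R + t * Num.max (d x (act p.2 a) - r p.1 / 2) 0.

Definition separating_fun (x : Y) : R :=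
  \big[Num.min/N.+1%:R]_(p <- graded_ball S N) level_cone p x.

Lemma separating_fun_lip x y : separating_fun x <= separating_fun y + t * d x y.
Proof.
have [d_ge0 [_ [_ dT]]] := d_metric.
apply: bigmin_leD => [|[k g]]; first by rewrite mulr_ge0 ?d_ge0 ?ltW.
rewrite /level_cone /=.
have : Num.max (d x (act g a) - r k / 2) 0 <=
       Num.max (d y (act g a) - r k / 2) 0 + d x y.
  have := le_max (d y (act g a) - r k / 2) (d y (act g a) - r k / 2) 0.
  have := le_max 0 (d y (act g a) - r k / 2) 0.
  rewrite !lexx orbT ge_max => /= h0 h1; have := dT x y (act g a); have := d_ge0 x y.
  by move=> h2 h3; apply/andP; split; lra.
by move=> /(ler_wpM2l (ltW t_gt0)); lra.
Qed.

Lemma separating_fun_act_le s z : List.In s S ->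
  separating_fun (act s z) <= separating_fun z + 1.
Proof.
have [_ [d_eq0 [dC _]]] := d_metric; have [_ actM] := act_action.
move=> Ss; rewrite -lerBlDr; apply: le_bigmin_In => [|[k g] kg_ball].
  by rewrite lerBlDr (le_trans (bigmin_le_id _ _ _ _)) ?lerDl.
rewrite lerBlDr; have t_max_ge0 : 0 <= t * Num.max (d z (act g a) - r k / 2) 0.
  by rewrite mulr_ge0 ?(ltW t_gt0) // le_max lexx orbT.
have [far|near] := leP N%:R (level_cone (k, g) z).
  by rewrite (le_trans (bigmin_le_id _ _ _ _)) // -natr1 lerD2r.
have kN : (k < N)%N.
  by move: near; rewrite /level_cone /= => near; rewrite -(ltr_nat R); lra.
have zk : d (act g a) z < r k.
  have := t_r_ge k; move: near; rewrite dC /level_cone /= => near trk.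
  have : t * Num.max (d z (act g a) - r k / 2) 0 < t * (r k / 2).
    by have := ler0n R k; have := ltr_nat R N N.+1; rewrite ltnSn; lra.
  rewrite ltr_pM2l // gt_max => /andP[+ _]; lra.
apply: (@le_trans _ _ (level_cone (k.+1, gmul s g) (act s z))).
  apply/bigmin_le_In/graded_ballP; have [_ Pkg] := (graded_ballP _ _ _ _).1 kg_ball.
  by split; last exact: products_mul.
rewrite /level_cone /= actM dC.
have -> : Num.max (d (act s (act g a)) (act s z) - r k.+1 / 2) 0 = 0.
  by apply/max_idPr; have := r_step kg_ball kN Ss zk; lra.
by rewrite mulr0 addr0 -natr1 lerD2r /level_cone /=; lra.
Qed.

Lemma separating_fun_move s z : List.In s S ->
  `|separating_fun z - separating_fun (act s z)| <= 1.
Proof.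
have [act1 actM] := act_action => Ss; rewrite ler_norml.
have := separating_fun_act_le z Ss.
have := separating_fun_act_le (act s z) (S_sym Ss).
by rewrite -actM gmulV act1 => ? ?; apply/andP; split; lra.
Qed.

Lemma separating_fun_base : separating_fun a <= 0.
Proof.
have [_ [d_eq0 _]] := d_metric; have [act1 _] := act_action.
have ball0 : List.In (0%N, gone G) (graded_ball S N) by apply/graded_ballP; split=> //; left.
apply: le_trans (bigmin_le_In _ _ ball0) _.
rewrite /level_cone /= act1 (d_eq0 a a).2 // add0r (_ : Num.max _ 0 = 0) ?mulr0 //.
by apply/max_idPr; rewrite subr_le0 divr_ge0 ?ltW.
Qed.

Lemma separating_fun_far b :
  (forall k g, List.In (k, g) (graded_ball S N) -> r k <= d b (act g a)) ->
  N.+1%:R <= separating_fun b.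
Proof.
move=> far; apply: le_bigmin_In => // -[k g] /far /= rk.
apply: le_trans (t_r_ge k) _; rewrite /level_cone /= -[X in X <= _]add0r lerD //.
by rewrite ler_pM2l // le_max; apply/orP; left; lra.
Qed.

Lemma warped_dist_separated b :
  (forall k g, List.In (k, g) (graded_ball S N) -> r k <= d b (act g a)) ->
  N.+1%:R / 2 <= warped_dist S act d t a b.
Proof.
move=> far; have [d_ge0 _] := d_metric.
apply: le_trans (warped_dist_ge a b (test_metric_admissible d_metric t_gt0
  separating_fun_lip separating_fun_move)).
rewrite /test_metric ler_pM2r ?invr_gt0 // -[X in X <= _]addr0 lerD //.
  rewrite ler_normr; apply/orP; right.
  by have := separating_fun_far far; have := separating_fun_base; lra.
by rewrite le_min mulr_ge0 ?d_ge0 ?ltW.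
Qed.

End Separation.

Section OrbitSeparation.
Variables (G : group) (S : seq G) (Y : Type) (d : Y -> Y -> R) (act : G -> Y -> Y).
Hypotheses (S_gen : fin_sym_gen S) (d_metric : is_metric d) (act_action : is_action act)
  (act_cont : forall g, dcontinuous d (act g)).

Lemma warped_dist_off_ball (a b : Y) (N : nat) :
  (forall k g, List.In (k, g) (graded_ball S N) -> b <> act g a) ->
  exists2 t : R, 0 < t & N.+1%:R / 2 <= warped_dist S act d t a b.
Proof.
move=> off_ball; have [d_ge0 [d_eq0 _]] := d_metric.
pose pts := List.map (fun p => act p.2 a) (graded_ball S N).
have [e e_gt0 e_le] : exists2 e : R, 0 < e &
    forall p, List.In p (graded_ball S N) -> e <= d b (act p.2 a).
  apply: In_common_radius => [p e e' /andP[_ e'e] /(le_trans e'e) //|[k g] /off_ball bg].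
  exists (d b (act g a)) => //; rewrite lt_def d_ge0 andbT.
  by apply/eqP => /d_eq0.
have [eta eta_spec] := finite_equicontinuity_modulus S pts act_cont.
have [r [r_gt0 r_bounds r_eta]] :=
  shrinking_radii N e_gt0 (fun x x_gt0 => (eta_spec x x_gt0).1).
have r0_gt0 := r_gt0 0%N.
have t_gt0 : 0 < N.+1%:R * 2 / r 0%N by rewrite divr_gt0 ?mulr_gt0.
exists (N.+1%:R * 2 / r 0%N) => //.
apply: (warped_dist_separated d_metric act_action S_gen.1 (r := r)) => //.
- move=> k; have /andP[r0k _] := r_bounds k.
  have -> : N.+1%:R * 2 / r 0%N * (r k / 2) = N.+1%:R * (r k / r 0%N).
    by field; rewrite gt_eqF.
  by rewrite ler_pMr ?ltr0n // ler_pdivlMr // mul1r.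
- move=> k g s z kg_ball kN Ss gz.
  have [_ eta_cont] := eta_spec (r k.+1 / 2) (divr_gt0 (r_gt0 _) (ltr0n _ 2)).
  apply: eta_cont => //; first exact: (List.in_map (fun p => act p.2 a) _ (k, g)).
  exact: lt_le_trans gz (r_eta k kN).
- move=> k g kg_ball; have /andP[_ rk_le] := r_bounds k.
  exact: le_trans rk_le (e_le (k, g) kg_ball).
Qed.

Lemma warped_dist_bounded_orbit (a b : Y) (D : R) :
  (forall t : R, 0 < t -> warped_dist S act d t a b <= D) ->
  exists g, (wordlen S g)%:R <= 2 * D /\ b = act g a.
Proof.
move=> wd_le; pose N := Num.truncn (2 * D).
have D_ge0 : 0 <= D := le_trans (warped_dist_ge0 S act d_metric ltr01 a b) (wd_le 1 ltr01).
have [[[k g] [kg_ball ->]]|off_ball] :=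
  pselect (exists p, List.In p (graded_ball S N) /\ b = act p.2 a).
  have [kN /products_is_word/wordlen_min gk] := (graded_ballP _ _ _ _).1 kg_ball.
  have N_le : N%:R <= 2 * D by rewrite truncn_le mulr_ge0.
  by exists g; split=> //; apply: le_trans N_le; rewrite ler_nat (leq_trans gk kN).
have [t t_gt0 wd_ge] := warped_dist_off_ball (N := N)
  (fun k g kg_ball bg => off_ball (ex_intro _ (k, g) (conj kg_ball bg))).
by have := truncnS_gt (2 * D); have := wd_le t t_gt0; lra.
Qed.

End OrbitSeparation.

(** * Orbit cocycles *)

Lemma orbit_displacement_wordlen (G H : group) (SG : seq G) (SH : seq H)
    (Y X : Type) (actY : G -> Y -> Y) (actX : H -> X -> X) (h : Y -> X) (K : R) :
  is_action actY -> is_action actX -> fin_sym_gen SG -> fin_sym_gen SH ->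
  (forall s y, List.In s SG ->
     exists dl, (wordlen SH dl)%:R <= K /\ h (actY s y) = actX dl (h y)) ->
  forall g y, exists dl,
    (wordlen SH dl)%:R <= K * (wordlen SG g)%:R /\ h (actY g y) = actX dl (h y).
Proof.
move=> [actY1 actYM] [actX1 actXM] SG_gen SH_gen gen_disp g y.
have [l [<- [SG_l <-]]] := wordlenP g SG_gen.
elim: l SG_l => [_|s l IH /List.Forall_cons_iff [SGs SG_l]] /=.
  by exists (gone H); rewrite wordlen1 mulr0 actY1 actX1.
have [dl1 [dl1_le e1]] := IH SG_l.
have [dl2 [dl2_le e2]] := gen_disp _ (actY (foldr (@gmul G) (gone G) l) y) SGs.
exists (gmul dl2 dl1); rewrite actYM e2 e1 actXM; split=> //.
apply: le_trans (_ : (wordlen SH dl2 + wordlen SH dl1)%:R <= _).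
  by rewrite ler_nat wordlenM.
by rewrite natrD -addn1 natrD mulrDr mulr1 addrC lerD.
Qed.

Section OrbitCocycle.
Variables (G H : group) (Y X : Type) (actY : G -> Y -> Y) (actX : H -> X -> X).
Variable h : Y -> X.
Hypotheses (actY_action : is_action actY) (actX_action : is_action actX)
  (actX_free : free_action actX).
Hypothesis h_orbit : forall g y, exists dl, h (actY g y) = actX dl (h y).

Definition orbit_cocycle g y : H := proj1_sig (cid (h_orbit g y)).

Lemma orbit_cocycleP g y : h (actY g y) = actX (orbit_cocycle g y) (h y).
Proof. exact: proj2_sig (cid (h_orbit g y)). Qed.

Lemma orbit_cocycle_unique g y dl :
  h (actY g y) = actX dl (h y) -> orbit_cocycle g y = dl.
Proof. by rewrite orbit_cocycleP; exact: free_action_inj. Qed.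

Lemma orbit_cocycleM g1 g2 y :
  gmul (orbit_cocycle g2 (actY g1 y)) (orbit_cocycle g1 y) = orbit_cocycle (gmul g2 g1) y.
Proof.
have [_ actYM] := actY_action; have [_ actXM] := actX_action.
by apply/esym/orbit_cocycle_unique; rewrite actXM -!orbit_cocycleP actYM.
Qed.

End OrbitCocycle.

Lemma orbit_cocycleK (G H : group) (Y X : Type) (actY : G -> Y -> Y) (actX : H -> X -> X)
    (h : Y -> X) (h' : X -> Y) (h_orbit : forall g y, exists dl, h (actY g y) = actX dl (h y))
    (h'_orbit : forall dl x, exists g, h' (actX dl x) = actY g (h' x)) :
  is_action actY -> free_action actY -> cancel h h' ->
  forall y, cancel (fun g => orbit_cocycle h_orbit g y)
                   (fun dl => orbit_cocycle h'_orbit dl (h y)).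
Proof.
move=> actY_action actY_free hK y g /=.
apply: (free_action_inj actY_action actY_free (y := y)).
transitivity (h' (actX (orbit_cocycle h_orbit g y) (h y))).
  by rewrite (orbit_cocycleP h'_orbit) hK.
by rewrite -(orbit_cocycleP h_orbit) hK.
Qed.

Lemma orbit_equivalence_cocycle (G H : group) (SG : seq G) (SH : seq H) (Y X : Type)
    (actY : G -> Y -> Y) (actX : H -> X -> X) (h : Y -> X) (h' : X -> Y) (K1 K2 : R) :
  fin_sym_gen SG -> fin_sym_gen SH -> is_action actY -> free_action actY ->
  is_action actX -> free_action actX -> cancel h h' -> cancel h' h ->
  (forall s y, List.In s SG ->
     exists dl, (wordlen SH dl)%:R <= K1 /\ h (actY s y) = actX dl (h y)) ->
  (forall s x, List.In s SH ->
     exists g, (wordlen SG g)%:R <= K2 /\ h' (actX s x) = actY g (h' x)) ->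
  exists delta : G -> Y -> H,
    [/\ forall g1 g2 y, gmul (delta g2 (actY g1 y)) (delta g1 y) = delta (gmul g2 g1) y,
        forall y, bijective (fun g => delta g y)
      & forall g y, (wordlen SH (delta g y))%:R <= K1 * (wordlen SG g)%:R /\
                    (wordlen SG g)%:R <= K2 * (wordlen SH (delta g y))%:R].
Proof.
move=> SG_gen SH_gen actY_action actY_free actX_action actX_free hK h'K h_gen h'_gen.
have h_disp := orbit_displacement_wordlen actY_action actX_action SG_gen SH_gen h_gen.
have h'_disp := orbit_displacement_wordlen actX_action actY_action SH_gen SG_gen h'_gen.
have h_orbit g y : exists dl, h (actY g y) = actX dl (h y).
  by have [dl [_ ?]] := h_disp g y; exists dl.
have h'_orbit dl x : exists g, h' (actX dl x) = actY g (h' x).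
  by have [g [_ ?]] := h'_disp dl x; exists g.
have delta_inv := orbit_cocycleK h_orbit h'_orbit actY_action actY_free hK.
exists (orbit_cocycle h_orbit); split=> [||g y]; first exact: orbit_cocycleM.
  move=> y; exists (fun dl => orbit_cocycle h'_orbit dl (h y)) => [|dl].
    exact: delta_inv.
  by have := orbit_cocycleK h'_orbit h_orbit actX_action actX_free h'K (h y) dl; rewrite hK.
have [dl [dl_le h_gy]] := h_disp g y.
have [g' [g'_le h'_dl]] := h'_disp dl (h y).
rewrite (orbit_cocycle_unique actX_action actX_free h_orbit h_gy); split=> //.
suff <- : g' = g by [].
rewrite -(delta_inv y g) /= (orbit_cocycle_unique actX_action actX_free h_orbit h_gy).
by rewrite (orbit_cocycle_unique actY_action actY_free h'_orbit h'_dl).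
Qed.

Lemma quasi_isometry_inv_le (Z W : Type) (dZ : Z -> Z -> R) (dW : W -> W -> R)
    (C A : R) (g : Z -> W) (g' : W -> Z) :
  quasi_isometry dZ dW C A g -> cancel g' g -> 0 < C ->
  forall w w', dZ (g' w) (g' w') <= C * dW w w' + C * A.
Proof.
move=> [g_qi _] g'K C_gt0 w w'; have [+ _] := g_qi (g' w) (g' w').
by rewrite !g'K lerBlDr ler_pdivrMl // mulrDr.
Qed.

Lemma coarse_lipschitz_warped_orbit (G H : group) (SG : seq G) (SH : seq H) (Y X : Type)
    (dY : Y -> Y -> R) (dX : X -> X -> R) (actY : G -> Y -> Y) (actX : H -> X -> X)
    (h : Y -> X) (I : Type) (t tau : I -> R) (C A : R) :
  fin_sym_gen SH -> is_metric dY -> is_metric dX -> is_action actX ->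
  (forall dl, dcontinuous dX (actX dl)) ->
  (forall i, 0 < t i) -> (forall r : R, 0 < r -> exists i, tau i = r) -> 0 <= C ->
  (forall i y y', warped_dist SH actX dX (tau i) (h y) (h y') <=
                  C * warped_dist SG actY dY (t i) y y' + A) ->
  forall s y, List.In s SG ->
    exists dl, (wordlen SH dl)%:R <= 2 * (C + A) /\ h (actY s y) = actX dl (h y).
Proof.
move=> SH_gen dY_metric dX_metric actX_action actX_cont t_gt0 tau_onto C_ge0 h_lip s y SGs.
apply: (warped_dist_bounded_orbit SH_gen dX_metric actX_action actX_cont).
move=> _ /tau_onto [i <-]; apply: le_trans (h_lip i y (actY s y)) _.
by rewrite lerD2r; apply: ler_piMr C_ge0 (warped_dist_gen actY dY_metric (t_gt0 i) y SGs).
Qed.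

Theorem corollary4p7
  (Gam Del : group) (SG : seq Gam) (SD : seq Del)
  (Y X : Type) (dY : Y -> Y -> R) (dX : X -> X -> R)
  (actY : Gam -> Y -> Y) (actX : Del -> X -> X) (f : Y -> X)
  (I : Type) (t tau : I -> R) (C A : R) :
  fin_sym_gen SG -> fin_sym_gen SD ->
  free_cont_action dY actY -> free_cont_action dX actX ->
  bijective f ->
  (forall i, 0 < t i) -> (forall r : R, 0 < r -> exists i, t i = r) ->
  (forall i, 0 < tau i) -> (forall r : R, 0 < r -> exists i, tau i = r) ->
  1 <= C -> 0 <= A ->
  (forall i, quasi_isometry (warped_dist SG actY dY (t i))
                            (warped_dist SD actX dX (tau i)) C A f) ->
  exists delta : Gam -> Y -> Del,
    (forall g1 g2 y, gmul (delta g2 (actY g1 y)) (delta g1 y) = delta (gmul g2 g1) y) /\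
    (forall y, bijective (fun g => delta g y)) /\
    exists C' A' : R, 1 <= C' /\ 0 <= A' /\
      forall g y,
        C'^-1 * (wordlen SG g)%:R - A' <= (wordlen SD (delta g y))%:R /\
        (wordlen SD (delta g y))%:R <= C' * (wordlen SG g)%:R + A'.
Proof.
move=> SG_gen SD_gen [dY_metric [_ [actY_action [actY_free actY_cont]]]]
  [dX_metric [_ [actX_action [actX_free actX_cont]]]] [f' fK f'K]
  t_gt0 t_onto tau_gt0 tau_onto C_ge1 A_ge0 f_qi.
have C_gt0 : 0 < C by lra.
have f_gen := coarse_lipschitz_warped_orbit SD_gen dY_metric dX_metric actX_action actX_cont
  t_gt0 tau_onto (ltW C_gt0) (fun i y y' => ((f_qi i).1 y y').2).
have f'_gen := coarse_lipschitz_warped_orbit SG_gen dX_metric dY_metric actY_action actY_cont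
  tau_gt0 t_onto (ltW C_gt0) (fun i => quasi_isometry_inv_le (f_qi i) f'K C_gt0).
have [delta [delta_cocycle delta_bij delta_wordlen]] :=
  orbit_equivalence_cocycle SG_gen SD_gen actY_action actY_free actX_action actX_free
    fK f'K f_gen f'_gen.
exists delta; split=> //; split=> //.
pose C' := 1 + 2 * (C + A) + 2 * (C + C * A).
have CA_ge0 : 0 <= C * A by rewrite mulr_ge0 ?(ltW C_gt0).
have K1_le : 2 * (C + A) <= C' by rewrite /C'; lra.
have K2_le : 2 * (C + C * A) <= C' by rewrite /C'; lra.
exists C', 0; split; first by rewrite /C'; lra.
split=> // g y; rewrite subr0 addr0 ler_pdivrMl; last by rewrite /C'; lra.
have [upper lower] := delta_wordlen g y; split.
- exact: le_trans lower (ler_wpM2r (ler0n _ _) K2_le).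
- exact: le_trans upper (ler_wpM2r (ler0n _ _) K1_le).
Qed.
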